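(* Let $a<b$, $k>0$, $\lambda\in(0,\pi/2]$, $f\in C^3([a,b])$, and put $\mu_1=\sup_{t\in[a,b]}|f''(t)|$, $\mu_2=\sup_{t\in[a,b]}|f'''(t)|$. Let $\epsilon\in J_n$ for some $n\ge0$, and let $y_\epsilon$ be the solution of $\epsilon y''+ky=f(t)$ on $[a,b]$, $y'(a)=y'(b)=0$. Then for every $t_0\in[a,b]$, $$\Big|y_\epsilon(t_0)-\frac{f(t_0)}{k}\Big|\le\frac{1}{k\sin\lambda}\sqrt{\frac{\epsilon}{k}}\Big\{|f'(a)|+|f'(b)|+\sqrt{\frac{\epsilon}{k}}\big(|f''(a)|+\mu_2(b-a)\big)\Big\}+\frac1k\sqrt{\frac{\epsilon}{k}}\Big\{|f'(a)|+\sqrt{\frac{\epsilon}{k}}\big(\mu_1+|f''(a)|+\mu_2(b-a)\big)\Big\}.$$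
   Context: For a fixed constant $\lambda\in(0,\pi/2]$ and $n=0,1,2,\dots$ define the closed intervals $$J_n=\left[\,k\left(\frac{b-a}{(n+1)\pi-\lambda}\right)^2,\ k\left(\frac{b-a}{n\pi+\lambda}\right)^2\,\right].$$ Note that $\epsilon\in J_n$ iff $\sqrt{k/\epsilon}\,(b-a)\in[n\pi+\lambda,(n+1)\pi-\lambda]$. *)

From Stdlib Require Import Reals Lra.
Open Scope R_scope.

(* g' is the derivative of g on the closed interval [a,b], taken within
   [a,b] (so one-sided at the endpoints). *)
Definition deriv_on (a b : R) (g g' : R -> R) : Prop :=
  forall t, a <= t <= b ->
    limit1_in (fun x => (g x - g t) / (x - t))
              (fun x => a <= x <= b /\ x <> t) (g' t) t.

Definition cont_on (a b : R) (g : R -> R) : Prop :=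
  forall t, a <= t <= b -> limit1_in g (fun x => a <= x <= b) (g t) t.

Definition J (k a b lam : R) (n : nat) (eps : R) : Prop :=
  k * ((b - a) / ((INR n + 1) * PI - lam)) ^ 2 <= eps /\
  eps <= k * ((b - a) / (INR n * PI + lam)) ^ 2.

From Stdlib Require Import Reals Lra.
From Coquelicot Require Import Coquelicot.
Open Scope R_scope.

(* Put s = sqrt (eps / k) and Z = y - f / k.  The pair u = Z / s + s f'' / k,
   v = Z' solves the forced harmonic system u' = v / s + s f''' / k,
   v' = - u / s, so its coordinates in the frame rotating by the angle
   (t - a) / s drift at speed at most s mu2 / k.  Reading the frame at b, where
   v (b) = - f'(b) / k, bounds |u (a)| |sin ((b - a) / s)|, and eps in J_n means
   exactly that |sin ((b - a) / s)| >= sin lam.  Reading it at t0 then bounds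
   u (t0), hence Z (t0) = s (u (t0) - s f''(t0) / k). *)

Lemma limit1_in_punctured (g : R -> R) (D : R -> Prop) (c : R) :
  limit1_in g (fun x => D x /\ x <> c) (g c) c -> limit1_in g D (g c) c.
Proof.
  intros H e He. destruct (H e He) as [d [Hd Hl]].
  exists d; split; [exact Hd|]. intros x [Dx Hx].
  destruct (Req_dec x c) as [->|Hxc].
  - simpl; unfold R_dist. rewrite Rminus_diag, Rabs_R0. exact He.
  - apply Hl; tauto.
Qed.

Lemma continuity_pt_limit1_in (g : R -> R) (D : R -> Prop) (c : R) :
  continuity_pt g c -> limit1_in g D (g c) c.
Proof.
  intros H. apply limit1_in_punctured, limit1_imp with (D_x no_cond c); [|exact H].
  intros x [_ Hx]. split; [exact I|auto].
Qed.

Lemma deriv_on_derivable_pt_lim (a b : R) (g g' : R -> R) (c : R) :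
  deriv_on a b g g' -> a < c < b -> derivable_pt_lim g c (g' c).
Proof.
  intros H Hc e He.
  destruct (H c ltac:(lra) e He) as [d [Hd Hl]].
  assert (Hr : 0 < Rmin d (Rmin (c - a) (b - c))) by (repeat apply Rmin_pos; lra).
  exists (mkposreal _ Hr). intros h Hh0 Hh; simpl in Hh.
  assert (Hd1 := Rmin_l d (Rmin (c - a) (b - c))).
  assert (Hd2 := Rmin_r d (Rmin (c - a) (b - c))).
  assert (Hd3 := Rmin_l (c - a) (b - c)).
  assert (Hd4 := Rmin_r (c - a) (b - c)).
  destruct (Rabs_def2 _ _ Hh).
  specialize (Hl (c + h)); simpl in Hl; unfold R_dist in Hl.
  replace (c + h - c) with h in Hl by ring.
  apply Hl. repeat split; lra.
Qed.

Lemma deriv_on_cont_on (a b : R) (g g' : R -> R) :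
  deriv_on a b g g' -> cont_on a b g.
Proof.
  intros H t Ht. apply limit1_in_punctured.
  apply limit1_ext with (fun x => g t + (g x - g t) / (x - t) * (x - t)).
  { intros x [_ Hx]. field. lra. }
  assert (Hlim : limit1_in (fun x => g t + (g x - g t) / (x - t) * (x - t))
                  (fun x => a <= x <= b /\ x <> t) (g t + g' t * (t - t)) t).
  { apply limit_plus; [apply limit_free|apply limit_mul; [exact (H t Ht)|]].
    apply limit_minus; [apply lim_x|apply (limit_free (fun x => x))]. }
  rewrite Rminus_diag, Rmult_0_r, Rplus_0_r in Hlim. exact Hlim.
Qed.

Lemma cont_on_continuous (a b : R) (g : R -> R) :
  (forall t, continuity_pt g t) -> cont_on a b g.
Proof. intros H t _. apply continuity_pt_limit1_in, H. Qed.

Lemma cont_on_plus (a b : R) (g h : R -> R) :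
  cont_on a b g -> cont_on a b h -> cont_on a b (fun t => g t + h t).
Proof. intros Hg Hh t Ht. apply limit_plus; auto. Qed.

Lemma cont_on_opp (a b : R) (g : R -> R) :
  cont_on a b g -> cont_on a b (fun t => - g t).
Proof. intros Hg t Ht. apply limit_Ropp; auto. Qed.

Lemma cont_on_mult (a b : R) (g h : R -> R) :
  cont_on a b g -> cont_on a b h -> cont_on a b (fun t => g t * h t).
Proof. intros Hg Hh t Ht. apply limit_mul; auto. Qed.

Lemma cont_on_const (a b c : R) : cont_on a b (fun _ => c).
Proof. intros t _. exact (limit_free (fun _ => c) _ t t). Qed.

Definition clamp (a t x : R) : R := Rmax a (Rmin t x).

Lemma clamp_between (a t x : R) : a <= t -> a <= clamp a t x <= t.
Proof. intros; unfold clamp, Rmax, Rmin; repeat destruct Rle_dec; lra. Qed.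

Lemma clamp_id (a t x : R) : a <= x <= t -> clamp a t x = x.
Proof. intros; unfold clamp, Rmax, Rmin; repeat destruct Rle_dec; lra. Qed.

Lemma clamp_lipschitz (a t x x' : R) :
  a <= t -> Rabs (clamp a t x - clamp a t x') <= Rabs (x - x').
Proof.
  intros; unfold clamp, Rmax, Rmin; repeat destruct Rle_dec;
  unfold Rabs; repeat destruct Rcase_abs; lra.
Qed.

Lemma increment_le_of_derivative_bound (a b t M : R) (F F' : R -> R) :
  a <= t <= b -> cont_on a b F ->
  (forall c, a < c < t -> derivable_pt_lim F c (F' c)) ->
  (forall c, a < c < t -> Rabs (F' c) <= M) ->
  Rabs (F t - F a) <= M * (t - a).
Proof.
  intros Ht HF HF' HM.
  destruct (Req_dec a t) as [<-|Hat].
  { rewrite !Rminus_diag, Rabs_R0, Rmult_0_r. apply Rle_refl. }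
  (* F is only continuous relative to [a,b]; clamping makes it continuous on R. *)
  set (G x := F (clamp a t x)).
  assert (HG' : forall c, a < c < t -> derivable_pt_lim G c (F' c)).
  { intros c Hc e He. destruct (HF' c Hc e He) as [d Hd].
    assert (Hr : 0 < Rmin d (Rmin (c - a) (t - c))).
    { repeat apply Rmin_pos; try lra. apply cond_pos. }
    exists (mkposreal _ Hr). intros h Hh0 Hh; simpl in Hh.
    assert (Hd1 := Rmin_l d (Rmin (c - a) (t - c))).
    assert (Hd2 := Rmin_r d (Rmin (c - a) (t - c))).
    assert (Hd3 := Rmin_l (c - a) (t - c)).
    assert (Hd4 := Rmin_r (c - a) (t - c)).
    destruct (Rabs_def2 _ _ Hh).
    unfold G. rewrite !clamp_id by lra. apply Hd; lra. }
  assert (HG : forall c, continuity_pt G c).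
  { intros c e He.
    destruct (clamp_between a t c ltac:(lra)) as [Hc1 Hc2].
    destruct (HF (clamp a t c) ltac:(lra) e He) as [d [Hd Hl]].
    exists d; split; [exact Hd|]. intros x [_ Hx]; simpl in *; unfold R_dist in *.
    destruct (clamp_between a t x ltac:(lra)).
    pose proof (clamp_lipschitz a t x c ltac:(lra)).
    apply Hl; split; [lra|]. simpl; unfold R_dist; lra. }
  set (pr := fun c (Hc : a < c < t) =>
    exist (fun l => derivable_pt_lim G c l) (F' c) (HG' c Hc)).
  destruct (MVT G id a t pr (fun c _ => derivable_pt_id c) ltac:(lra)
              (fun c _ => HG c) (fun c _ => derivable_continuous_pt _ _ (derivable_pt_id c)))
    as [c [Hc Hmvt]].
  unfold pr in Hmvt; simpl in Hmvt.
  rewrite (derive_pt_eq_0 id c 1 _ (derivable_pt_lim_id c)) in Hmvt.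
  unfold G, id in Hmvt. rewrite !clamp_id in Hmvt by lra.
  rewrite Rmult_1_r in Hmvt. rewrite <- Hmvt, Rabs_mult, (Rabs_right (t - a)) by lra.
  rewrite Rmult_comm. apply Rmult_le_compat_r; [lra|auto].
Qed.

Lemma Rabs_sin_plus_nPI (x : R) (n : nat) : Rabs (sin (x + INR n * PI)) = Rabs (sin x).
Proof.
  induction n as [|n IH].
  - simpl. rewrite Rmult_0_l, Rplus_0_r. reflexivity.
  - rewrite S_INR. replace (x + (INR n + 1) * PI) with (x + INR n * PI + PI) by ring.
    rewrite neg_sin, Rabs_Ropp. exact IH.
Qed.

Lemma sin_le_sin_between (lam x : R) :
  0 < lam <= PI / 2 -> lam <= x <= PI - lam -> sin lam <= sin x.
Proof.
  intros Hlam Hx. pose proof PI_RGT_0.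
  destruct (Rle_dec x (PI / 2)).
  - apply sin_incr_1; lra.
  - rewrite <- (sin_PI_x x). apply sin_incr_1; lra.
Qed.

Lemma sin_le_Rabs_sin (lam x : R) (n : nat) :
  0 < lam <= PI / 2 -> INR n * PI + lam <= x <= (INR n + 1) * PI - lam ->
  sin lam <= Rabs (sin x).
Proof.
  intros Hlam Hx.
  replace x with (x - INR n * PI + INR n * PI) by ring.
  rewrite Rabs_sin_plus_nPI.
  assert (sin lam <= sin (x - INR n * PI)) by (apply sin_le_sin_between; lra).
  assert (0 < sin lam) by (apply sin_gt_0; pose proof PI_RGT_0; lra).
  rewrite Rabs_right; lra.
Qed.

Lemma Rabs_lin_sin_cos_le (p q x : R) :
  p ^ 2 + q ^ 2 <= 1 -> Rabs (p * sin x + q * cos x) <= 1.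
Proof.
  intros Hpq. pose proof (sin2_cos2 x) as Hx. unfold Rsqr in Hx.
  assert (Hlagrange : (p * sin x + q * cos x) ^ 2 + (p * cos x - q * sin x) ^ 2
                      = (p ^ 2 + q ^ 2) * (sin x * sin x + cos x * cos x)) by ring.
  rewrite Hx, Rmult_1_r in Hlagrange.
  pose proof (pow2_ge_0 (p * cos x - q * sin x)).
  apply Rabs_le. split; nra.
Qed.

Lemma Rabs_lin_le (p q x x' : R) :
  Rabs p <= 1 -> Rabs q <= 1 -> Rabs (p * x + q * x') <= Rabs x + Rabs x'.
Proof.
  intros Hp Hq. eapply Rle_trans; [apply Rabs_triang|]. rewrite !Rabs_mult.
  pose proof (Rabs_pos x). pose proof (Rabs_pos x'). nra.
Qed.

Lemma J_pos (k a b lam eps : R) (n : nat) :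
  a < b -> 0 < k -> 0 < lam <= PI / 2 -> J k a b lam n eps -> 0 < eps.
Proof.
  intros Hab Hk Hlam [HJ _]. pose proof PI_RGT_0. pose proof (pos_INR n).
  eapply Rlt_le_trans; [|exact HJ].
  apply Rmult_lt_0_compat; [exact Hk|]. apply pow_lt, Rdiv_lt_0_compat; nra.
Qed.

Lemma J_scaled_length (k a b lam eps : R) (n : nat) :
  a < b -> 0 < k -> 0 < lam <= PI / 2 -> J k a b lam n eps ->
  INR n * PI + lam <= (b - a) / sqrt (eps / k) <= (INR n + 1) * PI - lam.
Proof.
  intros Hab Hk Hlam HJ.
  pose proof (J_pos k a b lam eps n Hab Hk Hlam HJ) as Heps.
  destruct HJ as [HJ1 HJ2]. pose proof PI_RGT_0. pose proof (pos_INR n).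
  set (d := INR n * PI + lam) in *. set (d' := (INR n + 1) * PI - lam) in *.
  assert (Hd : 0 < d) by (unfold d; nra). assert (Hd' : 0 < d') by (unfold d'; nra).
  assert (Hs : 0 < sqrt (eps / k)) by (apply sqrt_lt_R0, Rdiv_lt_0_compat; lra).
  assert (Hlow : (b - a) / d' <= sqrt (eps / k)).
  { rewrite <- (sqrt_pow2 ((b - a) / d')) by (apply Rlt_le, Rdiv_lt_0_compat; lra).
    apply sqrt_le_1_alt. apply (Rmult_le_reg_l k); [lra|].
    replace (k * (eps / k)) with eps by (field; lra). exact HJ1. }
  assert (Hup : sqrt (eps / k) <= (b - a) / d).
  { rewrite <- (sqrt_pow2 ((b - a) / d)) by (apply Rlt_le, Rdiv_lt_0_compat; lra).
    apply sqrt_le_1_alt. apply (Rmult_le_reg_l k); [lra|].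
    replace (k * (eps / k)) with eps by (field; lra). exact HJ2. }
  set (s := sqrt (eps / k)) in *.
  assert (Hds : d * s <= b - a).
  { replace (b - a) with (d * ((b - a) / d)) by (field; lra).
    apply Rmult_le_compat_l; lra. }
  assert (Hds' : b - a <= d' * s).
  { replace (b - a) with (d' * ((b - a) / d')) by (field; lra).
    apply Rmult_le_compat_l; lra. }
  split; apply (Rmult_le_reg_r s); try lra;
    replace ((b - a) / s * s) with (b - a) by (field; lra); lra.
Qed.

(* For the unforced system u' = v / s, v' = - u / s both bracketed coordinates
   are constant; (p, q) selects the direction in which they are read. *)
Definition rotating_frame (a s p q : R) (u v : R -> R) (t : R) : R :=
  p * (v t * cos ((t - a) / s) + u t * sin ((t - a) / s))
  + q * (u t * cos ((t - a) / s) - v t * sin ((t - a) / s)).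

Lemma rotating_frame_derive (a s p q g c : R) (u v : R -> R) :
  s <> 0 ->
  derivable_pt_lim u c (v c / s + g) -> derivable_pt_lim v c (- u c / s) ->
  derivable_pt_lim (rotating_frame a s p q u v) c
    (g * (p * sin ((c - a) / s) + q * cos ((c - a) / s))).
Proof.
  intros Hs Hu Hv. apply is_derive_Reals.
  apply is_derive_Reals in Hu. apply is_derive_Reals in Hv.
  unfold rotating_frame. auto_derive.
  - repeat split; eexists; eassumption.
  - replace (Derive (fun x => u x) c) with (v c / s + g)
      by (symmetry; apply is_derive_unique; exact Hu).
    replace (Derive (fun x => v x) c) with (- u c / s)
      by (symmetry; apply is_derive_unique; exact Hv).
    unfold Rdiv, Rminus. field. exact Hs.
Qed.

Lemma rotating_frame_cont_on (a b a0 s p q : R) (u v : R -> R) :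
  cont_on a b u -> cont_on a b v -> cont_on a b (rotating_frame a0 s p q u v).
Proof.
  intros Hu Hv. assert (Htrig : forall h : R -> R, (forall x, continuity_pt h x) ->
    cont_on a b (fun t => h ((t - a0) / s))).
  { intros h Hh. apply cont_on_continuous. intros t. reg. apply Hh. }
  unfold rotating_frame.
  repeat first [ apply cont_on_plus | apply cont_on_opp | apply cont_on_mult
               | apply cont_on_const | apply Htrig, continuity_sin
               | apply Htrig, continuity_cos | assumption ].
Qed.

Lemma rotating_frame_start (a s p q : R) (u v : R -> R) :
  s <> 0 -> rotating_frame a s p q u v a = p * v a + q * u a.
Proof.
  intros Hs. unfold rotating_frame.
  replace ((a - a) / s) with 0 by (field; exact Hs). rewrite sin_0, cos_0. ring.
Qed.

Lemma rotating_frame_sin_cos (a s t : R) (u v : R -> R) :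
  rotating_frame a s (sin ((t - a) / s)) (cos ((t - a) / s)) u v t = u t.
Proof.
  unfold rotating_frame. pose proof (sin2_cos2 ((t - a) / s)) as H. unfold Rsqr in H.
  transitivity (u t * (sin ((t - a) / s) * sin ((t - a) / s)
                       + cos ((t - a) / s) * cos ((t - a) / s))); [ring|].
  rewrite H. ring.
Qed.

Lemma rotating_frame_cos_sin (a s t : R) (u v : R -> R) :
  rotating_frame a s (cos ((t - a) / s)) (- sin ((t - a) / s)) u v t = v t.
Proof.
  unfold rotating_frame. pose proof (sin2_cos2 ((t - a) / s)) as H. unfold Rsqr in H.
  transitivity (v t * (sin ((t - a) / s) * sin ((t - a) / s)
                       + cos ((t - a) / s) * cos ((t - a) / s))); [ring|].
  rewrite H. ring.
Qed.

Section Forced_harmonic.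

Variables (a b s M : R) (u v g : R -> R).
Hypotheses (Hs : s <> 0) (Hu : cont_on a b u) (Hv : cont_on a b v)
  (Hu' : forall c, a < c < b -> derivable_pt_lim u c (v c / s + g c))
  (Hv' : forall c, a < c < b -> derivable_pt_lim v c (- u c / s))
  (Hg : forall c, a < c < b -> Rabs (g c) <= M).

Lemma rotating_frame_increment_le (p q t : R) :
  p ^ 2 + q ^ 2 <= 1 -> a <= t <= b ->
  Rabs (rotating_frame a s p q u v t - rotating_frame a s p q u v a) <= M * (t - a).
Proof.
  intros Hpq Ht.
  apply (increment_le_of_derivative_bound a b t M _
           (fun c => g c * (p * sin ((c - a) / s) + q * cos ((c - a) / s)))).
  - exact Ht.
  - apply rotating_frame_cont_on; assumption.
  - intros c Hc. apply rotating_frame_derive; [exact Hs|apply Hu'|apply Hv']; lra.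
  - intros c Hc. rewrite Rabs_mult.
    pose proof (Rabs_lin_sin_cos_le p q ((c - a) / s) Hpq).
    pose proof (Rabs_pos (g c)). pose proof (Hg c ltac:(lra)).
    pose proof (Rabs_pos (p * sin ((c - a) / s) + q * cos ((c - a) / s))). nra.
Qed.

Lemma forced_harmonic_le (t : R) :
  a <= t <= b -> Rabs (u t) <= Rabs (v a) + Rabs (u a) + M * (t - a).
Proof.
  intros Ht. set (th := (t - a) / s).
  assert (Hpq : sin th ^ 2 + cos th ^ 2 <= 1).
  { pose proof (sin2_cos2 th). unfold Rsqr in *. lra. }
  pose proof (rotating_frame_increment_le _ _ t Hpq Ht) as Hinc.
  unfold th in Hinc. rewrite rotating_frame_sin_cos, rotating_frame_start in Hinc by exact Hs.
  fold th in Hinc.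
  pose proof (Rabs_lin_le (sin th) (cos th) (v a) (u a)
                (Rabs_le _ _ (SIN_bound th)) (Rabs_le _ _ (COS_bound th))).
  pose proof (Rabs_triang_inv (u t) (sin th * v a + cos th * u a)). lra.
Qed.

Lemma forced_harmonic_start_le :
  a <= b -> Rabs (u a) * Rabs (sin ((b - a) / s)) <= Rabs (v a) + Rabs (v b) + M * (b - a).
Proof.
  intros Hab. set (th := (b - a) / s).
  assert (Hpq : cos th ^ 2 + (- sin th) ^ 2 <= 1).
  { pose proof (sin2_cos2 th). unfold Rsqr in *. lra. }
  pose proof (rotating_frame_increment_le _ _ b Hpq (conj Hab (Rle_refl b))) as Hinc.
  unfold th in Hinc. rewrite rotating_frame_cos_sin, rotating_frame_start in Hinc by exact Hs.
  fold th in Hinc.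
  rewrite <- Rabs_mult.
  replace (u a * sin th) with (cos th * v a + (-1) * v b
                               + (v b - (cos th * v a + - sin th * u a))) by ring.
  eapply Rle_trans; [apply Rabs_triang|].
  pose proof (Rabs_lin_le (cos th) (-1) (v a) (v b) (Rabs_le _ _ (COS_bound th))
                ltac:(apply Rabs_le; lra)). lra.
Qed.

End Forced_harmonic.

Section Singular_perturbation.

Variables (a b k eps mu1 mu2 : R) (f f1 f2 f3 y y1 y2 : R -> R).
Hypotheses (Hab : a <= b) (Hk : 0 < k) (Heps : 0 < eps)
  (Hf : deriv_on a b f f1) (Hf1 : deriv_on a b f1 f2) (Hf2 : deriv_on a b f2 f3)
  (Hmu1 : forall t, a <= t <= b -> Rabs (f2 t) <= mu1)
  (Hmu2 : forall t, a <= t <= b -> Rabs (f3 t) <= mu2)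
  (Hy : deriv_on a b y y1) (Hy1 : deriv_on a b y1 y2)
  (Hode : forall t, a <= t <= b -> eps * y2 t + k * y t = f t)
  (Hya : y1 a = 0) (Hyb : y1 b = 0).

Let s := sqrt (eps / k).
Let u := fun t => (y t - f t / k) / s + f2 t * s / k.
Let v := fun t => y1 t - f1 t / k.

Lemma s_pos : 0 < s.
Proof. apply sqrt_lt_R0, Rdiv_lt_0_compat; assumption. Qed.

Lemma s_sqr : s * s = eps / k.
Proof. apply sqrt_sqrt, Rlt_le, Rdiv_lt_0_compat; assumption. Qed.

Lemma u_cont_on : cont_on a b u.
Proof.
  pose proof (deriv_on_cont_on _ _ _ _ Hy). pose proof (deriv_on_cont_on _ _ _ _ Hf).
  pose proof (deriv_on_cont_on _ _ _ _ Hf2). unfold u.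
  repeat first [ apply cont_on_plus | apply cont_on_opp | apply cont_on_mult
               | apply cont_on_const | assumption ].
Qed.

Lemma v_cont_on : cont_on a b v.
Proof.
  pose proof (deriv_on_cont_on _ _ _ _ Hy1). pose proof (deriv_on_cont_on _ _ _ _ Hf1).
  unfold v.
  repeat first [ apply cont_on_plus | apply cont_on_opp | apply cont_on_mult
               | apply cont_on_const | assumption ].
Qed.

Lemma u_derive (c : R) : a < c < b -> derivable_pt_lim u c (v c / s + f3 c * s / k).
Proof.
  intros Hc. pose proof s_pos.
  pose proof (deriv_on_derivable_pt_lim _ _ _ _ c Hy Hc) as Dy.
  pose proof (deriv_on_derivable_pt_lim _ _ _ _ c Hf Hc) as Df.
  pose proof (deriv_on_derivable_pt_lim _ _ _ _ c Hf2 Hc) as Df2.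
  apply is_derive_Reals in Dy, Df, Df2. apply is_derive_Reals.
  unfold u, v. auto_derive.
  - repeat split; eexists; eassumption.
  - replace (Derive (fun x => y x) c) with (y1 c) by (symmetry; apply is_derive_unique; exact Dy).
    replace (Derive (fun x => f x) c) with (f1 c) by (symmetry; apply is_derive_unique; exact Df).
    replace (Derive (fun x => f2 x) c) with (f3 c) by (symmetry; apply is_derive_unique; exact Df2).
    field. lra.
Qed.

Lemma v_derive (c : R) : a < c < b -> derivable_pt_lim v c (- u c / s).
Proof.
  intros Hc. pose proof s_pos.
  pose proof (deriv_on_derivable_pt_lim _ _ _ _ c Hy1 Hc) as Dy1.
  pose proof (deriv_on_derivable_pt_lim _ _ _ _ c Hf1 Hc) as Df1.
  apply is_derive_Reals in Dy1, Df1. apply is_derive_Reals.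
  unfold v. auto_derive.
  - repeat split; eexists; eassumption.
  - replace (Derive (fun x => y1 x) c) with (y2 c) by (symmetry; apply is_derive_unique; exact Dy1).
    replace (Derive (fun x => f1 x) c) with (f2 c) by (symmetry; apply is_derive_unique; exact Df1).
    replace (- u c / s) with (- (y c - f c / k) / (s * s) - f2 c / k) by (unfold u; field; lra).
    rewrite s_sqr.
    replace (y2 c) with ((f c - k * y c) / eps) by (rewrite <- (Hode c ltac:(lra)); field; lra).
    field. lra.
Qed.

Lemma Rabs_scaled_le (x m : R) : Rabs x <= m -> Rabs (x * s / k) <= m * s / k.
Proof.
  intros Hx. pose proof s_pos. pose proof (Rinv_0_lt_compat k Hk).
  unfold Rdiv. rewrite !Rabs_mult, (Rabs_right s), (Rabs_right (/ k)) by lra.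
  apply Rmult_le_compat_r; [lra|]. apply Rmult_le_compat_r; lra.
Qed.

Lemma forcing_le (c : R) : a < c < b -> Rabs (f3 c * s / k) <= mu2 * s / k.
Proof. intros Hc. apply Rabs_scaled_le, Hmu2. lra. Qed.

Lemma Rabs_v_boundary (t : R) : y1 t = 0 -> Rabs (v t) = Rabs (f1 t) / k.
Proof.
  intros Ht. unfold v. rewrite Ht, Rminus_0_l, Rabs_Ropp.
  unfold Rdiv. rewrite Rabs_mult, Rabs_inv, (Rabs_right k) by lra. reflexivity.
Qed.

Lemma amplitude_start_le :
  Rabs (u a) * Rabs (sin ((b - a) / s))
  <= (Rabs (f1 a) + Rabs (f1 b)) / k + mu2 * s / k * (b - a).
Proof.
  pose proof s_pos.
  rewrite (Rdiv_plus_distr (Rabs (f1 a))), <- (Rabs_v_boundary a Hya), <- (Rabs_v_boundary b Hyb).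
  apply (forced_harmonic_start_le a b s _ u v (fun c => f3 c * s / k)).
  - lra.
  - exact u_cont_on.
  - exact v_cont_on.
  - exact u_derive.
  - exact v_derive.
  - exact forcing_le.
  - exact Hab.
Qed.

Lemma remainder_le (t0 : R) : a <= t0 <= b ->
  Rabs (y t0 - f t0 / k)
  <= s * (Rabs (f1 a) / k + Rabs (u a) + mu2 * s / k * (b - a) + mu1 * s / k).
Proof.
  intros Ht0. pose proof s_pos.
  pose proof (forced_harmonic_le a b s _ u v (fun c => f3 c * s / k) ltac:(lra)
                u_cont_on v_cont_on u_derive v_derive forcing_le t0 Ht0) as Hu.
  rewrite (Rabs_v_boundary a Hya) in Hu.
  replace (y t0 - f t0 / k) with (s * (u t0 - f2 t0 * s / k)) by (unfold u; field; lra).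
  rewrite Rabs_mult, (Rabs_right s) by lra. apply Rmult_le_compat_l; [lra|].
  eapply Rle_trans; [apply Rabs_triang|]. rewrite Rabs_Ropp.
  pose proof (Rabs_scaled_le _ _ (Hmu1 t0 Ht0)).
  assert (mu2 * s / k * (t0 - a) <= mu2 * s / k * (b - a)).
  { apply Rmult_le_compat_l; [|lra].
    pose proof (Rabs_scaled_le _ _ (Hmu2 a ltac:(lra))). pose proof (Rabs_pos (f3 a * s / k)). lra. }
  lra.
Qed.

Lemma singular_remainder_le (lam t0 : R) :
  0 < sin lam -> sin lam <= Rabs (sin ((b - a) / s)) -> a <= t0 <= b ->
  Rabs (y t0 - f t0 / k) <=
    1 / (k * sin lam) * s *
      (Rabs (f1 a) + Rabs (f1 b) + s * (Rabs (f2 a) + mu2 * (b - a)))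
    + 1 / k * s * (Rabs (f1 a) + s * (mu1 + Rabs (f2 a) + mu2 * (b - a))).
Proof.
  intros Hlam Hsin Ht0. pose proof s_pos.
  set (X := (Rabs (f1 a) + Rabs (f1 b)) / k + mu2 * s / k * (b - a)).
  assert (Hua : Rabs (u a) <= X / sin lam).
  { apply (Rmult_le_reg_r (sin lam)); [exact Hlam|].
    replace (X / sin lam * sin lam) with X by (field; lra).
    eapply Rle_trans; [|apply amplitude_start_le].
    apply Rmult_le_compat_l; [apply Rabs_pos|exact Hsin]. }
  eapply Rle_trans; [apply remainder_le, Ht0|].
  (* the stated bound exceeds this one by s^2 |f2 a| (1/(k sin lam) + 1/k) *)
  assert (Hgap : 0 <= s * s * Rabs (f2 a) * (1 / (k * sin lam) + 1 / k)).
  { assert (0 < 1 / (k * sin lam)).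
    { apply Rdiv_lt_0_compat; [lra|]. apply Rmult_lt_0_compat; assumption. }
    assert (0 < 1 / k) by (apply Rdiv_lt_0_compat; lra).
    repeat apply Rmult_le_pos; try apply Rabs_pos; lra. }
  assert (Hsu : s * Rabs (u a) <= s * (X / sin lam)) by (apply Rmult_le_compat_l; lra).
  match goal with |- _ <= ?rhs =>
    replace rhs with (s * (Rabs (f1 a) / k + X / sin lam + mu2 * s / k * (b - a) + mu1 * s / k)
                      + s * s * Rabs (f2 a) * (1 / (k * sin lam) + 1 / k))
      by (unfold X; field; lra)
  end.
  lra.
Qed.

End Singular_perturbation.

Lemma is_lub_Rabs_le (a b m : R) (g : R -> R) :
  is_lub (fun r => exists t, a <= t <= b /\ r = Rabs (g t)) m ->
  forall t, a <= t <= b -> Rabs (g t) <= m.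
Proof. intros [Hub _] t Ht. apply Hub. exists t. split; [exact Ht|reflexivity]. Qed.

Theorem mainTheorem3
  (a b k lam : R) (f f1 f2 f3 : R -> R) (mu1 mu2 eps : R) (n : nat)
  (y y1 y2 : R -> R) (t0 : R) :
  a < b -> 0 < k -> 0 < lam <= PI / 2 ->
  deriv_on a b f f1 -> deriv_on a b f1 f2 -> deriv_on a b f2 f3 ->
  cont_on a b f3 ->
  is_lub (fun r => exists t, a <= t <= b /\ r = Rabs (f2 t)) mu1 ->
  is_lub (fun r => exists t, a <= t <= b /\ r = Rabs (f3 t)) mu2 ->
  J k a b lam n eps ->
  deriv_on a b y y1 -> deriv_on a b y1 y2 ->
  (forall t, a <= t <= b -> eps * y2 t + k * y t = f t) ->
  y1 a = 0 -> y1 b = 0 ->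
  a <= t0 <= b ->
  Rabs (y t0 - f t0 / k) <=
    1 / (k * sin lam) * sqrt (eps / k) *
      (Rabs (f1 a) + Rabs (f1 b) + sqrt (eps / k) * (Rabs (f2 a) + mu2 * (b - a)))
    + 1 / k * sqrt (eps / k) *
      (Rabs (f1 a) + sqrt (eps / k) * (mu1 + Rabs (f2 a) + mu2 * (b - a))).
Proof.
  intros Hab Hk Hlam Hf Hf1 Hf2 _ Hmu1 Hmu2 HJ Hy Hy1 Hode Hya Hyb Ht0.
  apply (singular_remainder_le a b k eps mu1 mu2 f f1 f2 f3 y y1 y2);
    try assumption.
  - apply Rlt_le, Hab.
  - exact (J_pos k a b lam eps n Hab Hk Hlam HJ).
  - exact (is_lub_Rabs_le a b mu1 f2 Hmu1).
  - exact (is_lub_Rabs_le a b mu2 f3 Hmu2).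
  - apply sin_gt_0; pose proof PI_RGT_0; lra.
  - exact (sin_le_Rabs_sin lam _ n Hlam (J_scaled_length k a b lam eps n Hab Hk Hlam HJ)).
Qed.
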